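(* Let $u:\mathbb{Z}^2\to\mathbb{C}$ be the centers of a square-grid circle pattern with all face variables nonzero. Let $X=X^{(b)}(u)$ and $X'=X^{(w)}(M_b(u))$. Then $$X'_{m,n}=\begin{cases}X_{m,n}^{-1}&(m,n)\text{ black},\\ X_{m,n}\dfrac{(1+X_{m,n+1})(1+X_{m,n-1})}{(1+X_{m+1,n}^{-1})(1+X_{m-1,n}^{-1})}&(m,n)\text{ white}.\end{cases}$$ In particular $X>0$ everywhere if and only if $X'>0$ everywhere. The same statement holds for the white mutation with the roles of black and white (and of $X^{(b)},X^{(w)}$) exchanged.
   Context: Faces of the square grid are indexed by $(m,n)\in\mathbb{Z}^2$; face $(m,n)$ is black if $m+n$ is even, white otherwise; a circle pattern assigns to each face a circle with center $u_{m,n}$ such that the four corners of each face lie on its circle. Conventions: for $u=u_{m,n}$, $X^{(b)}_{m,n}=-\frac{(u_{m+1,n}-u)(u_{m-1,n}-u)}{(u_{m,n+1}-u)(u_{m,n-1}-u)}$ if $(m,n)$ is black and $X^{(b)}_{m,n}=-\frac{(u_{m,n+1}-u)(u_{m,n-1}-u)}{(u_{m+1,n}-u)(u_{m-1,n}-u)}$ if $(m,n)$ is white; $X^{(w)}=1/X^{(b)}$. The central move at face $(m,n)$ replaces $u_{m,n}$ by the root $\tilde u\neq u_{m,n}$ of $\frac{(u_{m+1,n}-z)(u_{m-1,n}-z)}{(u_{m,n+1}-z)(u_{m,n-1}-z)}=\frac{(u_{m+1,n}-u_{m,n})(u_{m-1,n}-u_{m,n})}{(u_{m,n+1}-u_{m,n})(u_{m,n-1}-u_{m,n})}$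 (double root: $\tilde u=u_{m,n}$). The black mutation $M_b$ applies the central move simultaneously to all black faces (white centers unchanged); the white mutation $M_w$ likewise for white faces. Miquel dynamics alternates $M_b$ and $M_w$. *)

(* Complex numbers are modelled by an arbitrary
   numClosedFieldType C (e.g. algC); the statement is purely algebraic. *)
From HB Require Import structures.
From mathcomp Require Import all_boot all_order all_algebra.
Set Implicit Arguments. Unset Strict Implicit. Unset Printing Implicit Defensive.
Import Order.TTheory GRing.Theory Num.Theory.
Local Open Scope ring_scope.

Definition black (m n : int) : bool := (2 %| m + n)%Z.

Definition hprod (C : numClosedFieldType) (u : int -> int -> C) (m n : int) : C :=
  (u (m + 1) n - u m n) * (u (m - 1) n - u m n).
Definition vprod (C : numClosedFieldType) (u : int -> int -> C) (m n : int) : C :=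
  (u m (n + 1) - u m n) * (u m (n - 1) - u m n).

Definition Xb (C : numClosedFieldType) (u : int -> int -> C) (m n : int) : C :=
  if black m n then - (hprod u m n / vprod u m n)
  else - (vprod u m n / hprod u m n).
Definition Xw (C : numClosedFieldType) (u : int -> int -> C) (m n : int) : C :=
  (Xb u m n)^-1.

(* All face variables are nonzero (and finite): numerator and denominator of
   every X_{m,n} are nonzero. *)
Definition face_variables_nonzero (C : numClosedFieldType) (u : int -> int -> C) : Prop :=
  forall m n, hprod u m n != 0 /\ vprod u m n != 0.

(* u is the family of centres of a square-grid circle pattern: there are
   vertex positions p (vertex (i,j) of Z^2), the four corners
   (m,n),(m+1,n),(m,n+1),(m+1,n+1) of face (m,n) being distinct points lying
   on a circle centred at u m n. *)
Definition is_circle_pattern (C : numClosedFieldType) (u : int -> int -> C) : Prop :=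
  exists p : int -> int -> C, forall m n,
    let cs := [:: p m n; p (m + 1) n; p m (n + 1); p (m + 1) (n + 1)] in
    uniq cs /\ exists r : C, forall z, z \in cs -> `|z - u m n| = r.

(* Cross-multiplied central-move equation in the unknown z:
   (a - z)(b - z)(c - x)(d - x) - (a - x)(b - x)(c - z)(d - z),
   where a,b are the horizontal and c,d the vertical neighbouring centres
   and x the current centre. *)
Definition central_poly (C : numClosedFieldType) (a b c d x : C) : {poly C} :=
  ('X - a%:P) * ('X - b%:P) * ((c - x) * (d - x))%:P
  - ((a - x) * (b - x))%:P * (('X - c%:P) * ('X - d%:P)).

(* y is the result of the central move at a face with current centre x:
   the equation is a genuine quadratic and its two roots (with multiplicity)
   are x and y, i.e. y is the root different from x, or y = x for a double
   root. *)
Definition central_move (C : numClosedFieldType) (a b c d x y : C) : Prop :=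
  let P := central_poly a b c d x in
  size P = 3%N /\ P = lead_coef P *: (('X - x%:P) * ('X - y%:P)).

Definition mutation (C : numClosedFieldType) (col : bool) (u u' : int -> int -> C) : Prop :=
  forall m n,
    if black m n == col then
      central_move (u (m + 1) n) (u (m - 1) n) (u m (n + 1)) (u m (n - 1)) (u m n) (u' m n)
    else u' m n = u m n.

Definition black_mutation (C : numClosedFieldType) := @mutation C true.
Definition white_mutation (C : numClosedFieldType) := @mutation C false.

From HB Require Import structures.
From mathcomp Require Import all_boot all_order all_algebra zify ring.
Import Order.TTheory GRing.Theory Num.Theory.
Set Implicit Arguments. Unset Strict Implicit. Unset Printing Implicit Defensive.
Local Open Scope ring_scope.

(* For a face with centre x, horizontal neighbouring centres a, b and vertical
   ones c, d, let k = -(a-x)(b-x) / ((c-x)(d-x)) (the "star ratio").  The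
   central move x |-> y says that the quadratic defining it has roots x, y;
   dividing by its vertical coefficient this becomes the identity, valid for
   every z,
       (z-a)(z-b) + k (z-c)(z-d) = (1+k)(z-x)(z-y).                       (I)
   At z = y this shows that a mutated face keeps its ratio, i.e. X' = 1/X.
   A face that is not mutated keeps its centre x while its four neighbours
   move; evaluating (I) for each neighbour at z = x expresses the new
   neighbours through x and the four diagonal centres, and a field identity
   yields the formula of the theorem.  Both uses need centres of diagonally
   adjacent faces to be distinct; this is where the circle pattern enters:
   two circles through three common distinct vertices have the same centre.
   Positivity transfers since X' is X or 1/X times positive factors. *)

Lemma black_incr_m (m n : int) : black (m + 1) n = ~~ black m n.
Proof. rewrite /black; lia. Qed.
Lemma black_decr_m (m n : int) : black (m - 1) n = ~~ black m n.
Proof. rewrite /black; lia. Qed.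
Lemma black_incr_n (m n : int) : black m (n + 1) = ~~ black m n.
Proof. rewrite /black; lia. Qed.
Lemma black_decr_n (m n : int) : black m (n - 1) = ~~ black m n.
Proof. rewrite /black; lia. Qed.

(* A quadratic polynomial with three distinct roots in an integral domain has
   zero leading coefficient: the two chords through t1 give a (t2 - t3) = 0. *)
Lemma quadratic_three_roots (R : idomainType) (a b c t1 t2 t3 : R) :
  t1 != t2 -> t1 != t3 -> t2 != t3 ->
  a * t1 ^+ 2 - b * t1 + c = 0 -> a * t2 ^+ 2 - b * t2 + c = 0 ->
  a * t3 ^+ 2 - b * t3 + c = 0 -> a = 0.
Proof.
move=> n12 n13 n23 q1 q2 q3.
have chord s t : s != t -> a * s ^+ 2 - b * s + c = 0 -> a * t ^+ 2 - b * t + c = 0 ->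
    a * (s + t) = b.
  move=> nst qs qt.
  have : (s - t) * (a * (s + t) - b) = (a * s ^+ 2 - b * s + c) - (a * t ^+ 2 - b * t + c).
    by ring.
  by rewrite qs qt subrr => /eqP; rewrite mulf_eq0 !subr_eq0 (negbTE nst) => /eqP.
have : a * (t2 - t3) = a * (t1 + t2) - a * (t1 + t3) by ring.
rewrite (chord _ _ n12 q1 q2) (chord _ _ n13 q1 q3) subrr => /eqP.
by rewrite mulf_eq0 subr_eq0 (negbTE n23) orbF => /eqP.
Qed.

Section Circles.
Variable C : numClosedFieldType.

Lemma circle_quadratic (z u v : C) :
  (u - v)^* * (z - u) ^+ 2
  - (`|z - v| ^+ 2 - `|z - u| ^+ 2 - (u - v) * (u - v)^*) * (z - u)
  + (u - v) * `|z - u| ^+ 2 = 0.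
Proof.
have -> : z - v = (z - u) + (u - v) by ring.
by rewrite !normCK rmorphD /=; ring.
Qed.

Lemma three_points_centre (z1 z2 z3 u v : C) : z1 != z2 -> z1 != z3 -> z2 != z3 ->
  `|z2 - u| = `|z1 - u| -> `|z3 - u| = `|z1 - u| ->
  `|z2 - v| = `|z1 - v| -> `|z3 - v| = `|z1 - v| -> u = v.
Proof.
move=> n12 n13 n23 u2 u3 v2 v3.
have shift z z' : z != z' -> z - u != z' - u by rewrite (inj_eq (addIr (- u))).
have root z : `|z - u| = `|z1 - u| -> `|z - v| = `|z1 - v| ->
    (u - v)^* * (z - u) ^+ 2
    - (`|z1 - v| ^+ 2 - `|z1 - u| ^+ 2 - (u - v) * (u - v)^*) * (z - u)
    + (u - v) * `|z1 - u| ^+ 2 = 0.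
  by move=> <- <-; apply: circle_quadratic.
have := quadratic_three_roots (shift _ _ n12) (shift _ _ n13) (shift _ _ n23)
  (root _ erefl erefl) (root _ u2 v2) (root _ u3 v3).
by move/eqP; rewrite conjC_eq0 subr_eq0 => /eqP.
Qed.

(* If the circle centred at u1 passes through z1, z2, the one centred at u3
   through z2, z3, and u1 = u3, then both are one circle through z1, z2, z3;
   so any circle through these three distinct points is centred at u1. *)
Lemma centre_of_shared_edges (z1 z2 z3 u1 u2 u3 : C) :
  z1 != z2 -> z1 != z3 -> z2 != z3 ->
  `|z2 - u1| = `|z1 - u1| -> `|z3 - u3| = `|z2 - u3| -> u1 = u3 ->
  `|z2 - u2| = `|z1 - u2| -> `|z3 - u2| = `|z1 - u2| -> u2 = u1.
Proof.
move=> n12 n13 n23 e12 e23 u13 f2 f3; subst u3.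
exact: three_points_centre n12 n13 n23 f2 f3 e12 (etrans e23 e12).
Qed.

End Circles.

Lemma uniq4 (T : eqType) (a b c d : T) : uniq [:: a; b; c; d] ->
  [/\ a != b, a != c, a != d & [/\ b != c, b != d & c != d]].
Proof.
by rewrite /= !inE !negb_or => /andP[/and3P[-> -> ->] /andP[/andP[-> ->] /andP[-> _]]].
Qed.

Definition corners (C : Type) (p : int -> int -> C) (m n : int) : seq C :=
  [:: p m n; p (m + 1) n; p m (n + 1); p (m + 1) (n + 1)].

Section DiagonalCentres.
Variable C : numClosedFieldType.
Variables u p : int -> int -> C.
Hypothesis corners_on_circles : forall m n,
  uniq (corners p m n) /\ exists r : C, forall z, z \in corners p m n -> `|z - u m n| = r.
Hypothesis hnz : face_variables_nonzero u.

Lemma corner_equidistant m n z w : z \in corners p m n -> w \in corners p m n ->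
  `|z - u m n| = `|w - u m n|.
Proof. by have [_ [r hr]] := corners_on_circles m n; move=> /hr -> /hr ->. Qed.

(* Faces (m,n) and (m+1,n+1) would share the circle through the three
   vertices p(m+1,n), p(m+1,n+1), p(m+2,n+1) of face (m+1,n), forcing
   u(m+1,n) = u(m,n). *)
Lemma centre_diag_up m n : u m n != u (m + 1) (n + 1).
Proof.
apply/eqP => E.
have [/uniq4[_ n12 n13 [_ _ n23]] _] := corners_on_circles (m + 1) n.
have : u (m + 1) n = u m n.
  by apply: (centre_of_shared_edges n12 n13 n23 _ _ E);
    apply: corner_equidistant; rewrite !inE eqxx ?orbT.
by move=> e; move: (hnz m n).1; rewrite /hprod e subrr mul0r eqxx.
Qed.

(* Faces (m+1,n) and (m,n+1) would share the circle through the three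
   vertices p(m+2,n+1), p(m+1,n+1), p(m+1,n+2) of face (m+1,n+1), forcing
   u(m+1,n+1) = u(m+1,n). *)
Lemma centre_diag_down m n : u (m + 1) n != u m (n + 1).
Proof.
apply/eqP => E.
have [/uniq4[n21 n23 _ [n13 _ _]] _] := corners_on_circles (m + 1) (n + 1).
rewrite eq_sym in n21.
have : u (m + 1) (n + 1) = u (m + 1) n.
  by apply: (centre_of_shared_edges n21 n13 n23 _ _ E);
    apply: corner_equidistant; rewrite !inE eqxx ?orbT.
by move=> e; move: (hnz (m + 1) n).2; rewrite /vprod e subrr mul0r eqxx.
Qed.

Lemma diagonal_centres_distinct m n m' n' :
  m' = m + 1 \/ m' = m - 1 -> n' = n + 1 \/ n' = n - 1 -> u m n != u m' n'.
Proof.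
move=> [] -> [] ->.
- exact: centre_diag_up.
- by have := centre_diag_down m (n - 1); rewrite subrK eq_sym.
- by have := centre_diag_down (m - 1) n; rewrite subrK.
- by have := centre_diag_up (m - 1) (n - 1); rewrite !subrK eq_sym.
Qed.

End DiagonalCentres.

Section CentralMove.
Variable C : numClosedFieldType.

Lemma central_poly_expand (a b c d x : C) :
  central_poly a b c d x =
  ((c - x) * (d - x) - (a - x) * (b - x))%:P * 'X^2
  - ((c - x) * (d - x) * (a + b) - (a - x) * (b - x) * (c + d))%:P * 'X
  + ((c - x) * (d - x) * (a * b) - (a - x) * (b - x) * (c * d))%:P.
Proof. rewrite /central_poly !(rmorphB, rmorphM, rmorphD) /=; ring. Qed.

Lemma central_poly_lead (a b c d x : C) : size (central_poly a b c d x) = 3%N ->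
  lead_coef (central_poly a b c d x) = (c - x) * (d - x) - (a - x) * (b - x).
Proof. by move=> s3; rewrite lead_coefE s3 central_poly_expand !coefE /=; ring. Qed.

(* The face variable of a face with centre x, horizontal neighbouring centres
   a, b and vertical ones c, d (equal to X^(b) at a black face). *)
Definition star_ratio (a b c d x : C) : C := - ((a - x) * (b - x) / ((c - x) * (d - x))).

Lemma central_move_identity (a b c d x y : C) : central_move a b c d x y ->
  (c - x) * (d - x) != 0 ->
  1 + star_ratio a b c d x != 0 /\
  (forall z, (z - a) * (z - b) + star_ratio a b c d x * ((z - c) * (z - d))
             = (1 + star_ratio a b c d x) * ((z - x) * (z - y))).
Proof.
move=> [s3 fact] nV.
have [ncx ndx] : c - x != 0 /\ d - x != 0 by move: nV; rewrite mulf_eq0 negb_or => /andP.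
have lead := central_poly_lead s3.
have nVH : (c - x) * (d - x) - (a - x) * (b - x) != 0.
  by rewrite -lead lead_coef_eq0 -size_poly_eq0 s3.
have one_plus : 1 + star_ratio a b c d x
    = ((c - x) * (d - x) - (a - x) * (b - x)) / ((c - x) * (d - x)).
  by rewrite /star_ratio; field; rewrite ncx ndx.
rewrite one_plus; split=> [|z]; first exact: mulf_neq0 nVH (invr_neq0 nV).
have := congr1 (horner^~ z) fact; rewrite lead /central_poly !hornerE /= => E.
rewrite /star_ratio; apply: (mulIf nV); apply: etrans _ (etrans E _);
  by field; rewrite ncx ndx.
Qed.

(* The central move keeps the star ratio: y is again a root of the defining
   equation.  The diagonal distinctness hypotheses ensure y differs from the
   vertical neighbours c, d, so that the new ratio is defined. *)
Lemma central_move_keeps_ratio (a b c d x y : C) : central_move a b c d x y ->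
  (c - x) * (d - x) != 0 -> c != a -> c != b -> d != a -> d != b ->
  star_ratio a b c d y = star_ratio a b c d x.
Proof.
move=> hmove nV ca cb da db.
have [_ ident] := central_move_identity hmove nV.
set k := star_ratio a b c d x in ident *.
have away w : w != a -> w != b ->
    (w - a) * (w - b) = (1 + k) * ((w - x) * (w - y)) -> w - y != 0.
  move=> wa wb E; apply/eqP => wy; move: E; rewrite wy !mulr0 => /eqP.
  by rewrite mulf_eq0 !subr_eq0 (negbTE wa) (negbTE wb).
have Ec := ident c; rewrite subrr mul0r mulr0 addr0 in Ec.
have Ed := ident d; rewrite subrr !mulr0 addr0 in Ed.
have Ey := ident y; rewrite subrr !mulr0 in Ey.
have nVy : (c - y) * (d - y) != 0 by exact: mulf_neq0 (away c ca cb Ec) (away d da db Ed).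
apply: (mulIf nVy); rewrite mulNr divfK //.
have : - ((a - y) * (b - y)) - k * ((c - y) * (d - y))
       = - ((y - a) * (y - b) + k * ((y - c) * (y - d))) by ring.
by rewrite Ey oppr0 => /eqP; rewrite subr_eq0 => /eqP.
Qed.
End CentralMove.

(* The field identity behind the formula at a non-mutated face.  With x the
   fixed centre, a = A - x for the old and a' = A' - x for the new right
   centre (similarly b, c, d), kA.. the ratios of the neighbouring faces and
   pA.. the products of differences x - (diagonal centres), the hypotheses are
   identity (I) of each neighbour at z = x; the conclusion is the theorem's
   formula -a'b'/(c'd') = X^-1 (1+kC)(1+kD) / ((1+kA^-1)(1+kB^-1)). *)
Lemma neighbour_ratio (F : fieldType) (kA kB kC kD a b c d a' b' c' d' pA pB pC pD : F) :
  kA != 0 -> kB != 0 -> 1 + kA != 0 -> 1 + kB != 0 -> 1 + kC != 0 -> 1 + kD != 0 ->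
  a != 0 -> b != 0 -> c != 0 -> d != 0 -> pC != 0 -> pD != 0 ->
  pA * pB = pC * pD ->
  kA * pA = (1 + kA) * (a * a') -> kB * pB = (1 + kB) * (b * b') ->
  pC = (1 + kC) * (c * c') -> pD = (1 + kD) * (d * d') ->
  - (a' * b' / (c' * d')) =
  (- (a * b / (c * d)))^-1 * (1 + kC) * (1 + kD) / ((1 + kA^-1) * (1 + kB^-1)).
Proof.
move=> nkA nkB n1A n1B n1C n1D na nb nc nd npC npD pAB eA eB eC eD.
have ab' : a' * b' = kA * kB * (pC * pD) / ((1 + kA) * (1 + kB) * (a * b)).
  rewrite -pAB (_ : kA * kB * (pA * pB) = (kA * pA) * (kB * pB)); last by ring.
  by rewrite eA eB; field; rewrite na nb n1A n1B.
have cd' : c' * d' = pC * pD / ((1 + kC) * (1 + kD) * (c * d)).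
  by rewrite [in RHS]eC [in RHS]eD; field; rewrite nc nd n1C n1D.
rewrite ab' cd'; field.
by rewrite oppr_eq0 mulf_neq0 // (addrC kA) (addrC kB) nkA nkB n1A n1B n1C n1D na nb nc nd npC npD.
Qed.

Section Mutation.
Variable C : numClosedFieldType.

(* The star ratio of face (m,n): X^(b) at black faces, 1 / X^(b) at white ones. *)
Definition face_ratio (w : int -> int -> C) (m n : int) : C :=
  star_ratio (w (m + 1) n) (w (m - 1) n) (w m (n + 1)) (w m (n - 1)) (w m n).

Variable u : int -> int -> C.
Hypothesis hnz : face_variables_nonzero u.
Hypothesis hdiag : forall m n m' n',
  m' = m + 1 \/ m' = m - 1 -> n' = n + 1 \/ n' = n - 1 -> u m n != u m' n'.

Lemma face_ratio_neq0 m n : face_ratio u m n != 0.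
Proof.
have [nH nV] := hnz m n.
by rewrite /face_ratio /star_ratio oppr_eq0; exact: mulf_neq0 nH (invr_neq0 nV).
Qed.

Lemma diff_diag_neq0 m n m' n' :
  m' = m + 1 \/ m' = m - 1 -> n' = n + 1 \/ n' = n - 1 -> u m' n' - u m n != 0.
Proof. by move=> hm hn; rewrite subr_eq0 eq_sym hdiag. Qed.

Variables (col : bool) (u' : int -> int -> C).
Hypothesis hmut : mutation col u u'.

Lemma fixed_face m n : black m n = ~~ col -> u' m n = u m n.
Proof. by move=> hb; have := hmut m n; rewrite hb; case: (col). Qed.

Lemma mutated_identity m n : black m n = col ->
  1 + face_ratio u m n != 0 /\
  (forall z, (z - u (m + 1) n) * (z - u (m - 1) n)
             + face_ratio u m n * ((z - u m (n + 1)) * (z - u m (n - 1)))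
             = (1 + face_ratio u m n) * ((z - u m n) * (z - u' m n))).
Proof.
move=> hb; have := hmut m n; rewrite hb eqxx => hmove.
exact: central_move_identity hmove (hnz m n).2.
Qed.

(* A mutated face keeps its ratio, since its neighbours are not moved. *)
Lemma mutated_face_ratio m n : black m n = col -> face_ratio u' m n = face_ratio u m n.
Proof.
move=> hb; have := hmut m n; rewrite hb eqxx => hmove.
have fixed p q : black p q = ~~ black m n -> u' p q = u p q by rewrite hb; apply: fixed_face.
rewrite /face_ratio (fixed (m + 1) n) ?black_incr_m // (fixed (m - 1) n) ?black_decr_m //.
rewrite (fixed m (n + 1)) ?black_incr_n // (fixed m (n - 1)) ?black_decr_n //.
apply: central_move_keeps_ratio hmove (hnz m n).2 _ _ _ _; apply: hdiag; lia.
Qed.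

(* A non-mutated face: its four neighbours are moved, and the new positions,
   read off the central-move identities at z = u m n, give the ratio. *)
Lemma neighbour_face_ratio m n : black m n = ~~ col ->
  face_ratio u' m n
  = (face_ratio u m n)^-1 * (1 + face_ratio u m (n + 1)) * (1 + face_ratio u m (n - 1))
    / ((1 + (face_ratio u (m + 1) n)^-1) * (1 + (face_ratio u (m - 1) n)^-1)).
Proof.
move=> hb.
have mutated p q : black p q = ~~ black m n -> black p q = col by rewrite hb negbK.
have [nA idA] := mutated_identity (mutated _ _ (black_incr_m m n)).
have [nB idB] := mutated_identity (mutated _ _ (black_decr_m m n)).
have [nC idC] := mutated_identity (mutated _ _ (black_incr_n m n)).
have [nD idD] := mutated_identity (mutated _ _ (black_decr_n m n)).
have flip s t : (u m n - s) * (u m n - t) = (s - u m n) * (t - u m n) by ring.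
have EA := idA (u m n); rewrite addrK subrr mulr0 add0r !flip in EA.
have EB := idB (u m n); rewrite subrK subrr mul0r add0r !flip in EB.
have EC := idC (u m n); rewrite addrK subrr !mulr0 addr0 !flip in EC.
have ED := idD (u m n); rewrite subrK subrr mul0r mulr0 addr0 !flip in ED.
have [nH nV] := hnz m n.
move: nH nV; rewrite /hprod /vprod !mulf_eq0 !negb_or => /andP[na nb] /andP[nc nd].
rewrite {1 2}/face_ratio /star_ratio (fixed_face hb).
apply: (neighbour_ratio _ _ nA nB nC nD na nb nc nd _ _ _ EA EB EC ED).
- exact: face_ratio_neq0.
- exact: face_ratio_neq0.
- by rewrite mulf_neq0 ?diff_diag_neq0 //; lia.
- by rewrite mulf_neq0 ?diff_diag_neq0 //; lia.
- ring.
Qed.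

Definition Xcol (c : bool) (w : int -> int -> C) (m n : int) : C :=
  if black m n == c then face_ratio w m n else (face_ratio w m n)^-1.

Lemma mutation_formula m n :
  Xcol (~~ col) u' m n
  = if black m n == col then (Xcol col u m n)^-1
    else Xcol col u m n * (1 + Xcol col u m (n + 1)) * (1 + Xcol col u m (n - 1))
         / ((1 + (Xcol col u (m + 1) n)^-1) * (1 + (Xcol col u (m - 1) n)^-1)).
Proof.
rewrite /Xcol black_incr_m black_decr_m black_incr_n black_decr_n.
have [/eqP hb | hb] := boolP (black m n == col).
  by rewrite hb (mutated_face_ratio hb); case: (col).
have hb' : black m n = ~~ col by move: hb; case: (black m n); case: (col).
rewrite hb' negbK !eqxx; exact: neighbour_face_ratio.
Qed.

End Mutation.

Lemma Xb_Xcol (C : numClosedFieldType) (u : int -> int -> C) m n : Xb u m n = Xcol true u m n.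
Proof.
rewrite /Xb /Xcol eqb_id /face_ratio /star_ratio; case: ifP => // _.
by rewrite invrN invf_div.
Qed.

Lemma Xw_Xcol (C : numClosedFieldType) (u : int -> int -> C) m n : Xw u m n = Xcol false u m n.
Proof. by rewrite /Xw Xb_Xcol /Xcol eqbF_neg; case: (black m n); rewrite ?invrK. Qed.

(* Positivity is preserved in both directions by the mutation formula: on the
   mutated colour X' = 1/X, and elsewhere X' is X times positive factors built
   from the (then positive) variables of the neighbouring faces. *)
Lemma positivity_transfer (R : numFieldType) (col : bool) (X Y : int -> int -> R) :
  (forall m n, Y m n =
     if black m n == col then (X m n)^-1
     else X m n * (1 + X m (n + 1)) * (1 + X m (n - 1))
          / ((1 + (X (m + 1) n)^-1) * (1 + (X (m - 1) n)^-1))) ->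
  (forall m n, 0 < X m n) <-> (forall m n, 0 < Y m n).
Proof.
move=> F; split=> pos m n.
  rewrite F; case: ifP => _; first by rewrite invr_gt0.
  by rewrite divr_gt0 ?mulr_gt0 ?addr_gt0 ?invr_gt0 ?ltr01.
have on_col p q : black p q == col -> 0 < X p q.
  by move=> hc; have := pos p q; rewrite F hc invr_gt0.
case hc: (black m n == col); first exact: on_col.
have nbr p q : black p q = ~~ black m n -> 0 < X p q.
  by move=> h; apply: on_col; rewrite h; move: hc; case: (black m n); case: (col).
have factor : 0 < (1 + X m (n + 1)) * ((1 + X m (n - 1))
                  / ((1 + (X (m + 1) n)^-1) * (1 + (X (m - 1) n)^-1))).
  by rewrite mulr_gt0 ?divr_gt0 ?mulr_gt0 ?addr_gt0 ?invr_gt0 ?ltr01 ?nbr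
       ?black_incr_m ?black_decr_m ?black_incr_n ?black_decr_n.
by have := pos m n; rewrite F hc -!mulrA (pmulr_lgt0 _ factor).
Qed.

Theorem mainTheorem12 (C : numClosedFieldType) (u : int -> int -> C) :
  is_circle_pattern u -> face_variables_nonzero u ->
  (forall u' : int -> int -> C, black_mutation u u' ->
     (forall m n, Xw u' m n =
        if black m n then (Xb u m n)^-1
        else Xb u m n * (1 + Xb u m (n + 1)) * (1 + Xb u m (n - 1))
             / ((1 + (Xb u (m + 1) n)^-1) * (1 + (Xb u (m - 1) n)^-1)))
     /\ ((forall m n, 0 < Xb u m n) <-> (forall m n, 0 < Xw u' m n)))
  /\
  (forall u' : int -> int -> C, white_mutation u u' ->
     (forall m n, Xb u' m n =
        if ~~ black m n then (Xw u m n)^-1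
        else Xw u m n * (1 + Xw u m (n + 1)) * (1 + Xw u m (n - 1))
             / ((1 + (Xw u (m + 1) n)^-1) * (1 + (Xw u (m - 1) n)^-1)))
     /\ ((forall m n, 0 < Xw u m n) <-> (forall m n, 0 < Xb u' m n))).
Proof.
move=> [p hcirc] hnz.
have hdiag := diagonal_centres_distinct hcirc hnz.
split=> u' hmut.
- have F m n : Xw u' m n = if black m n then (Xb u m n)^-1
        else Xb u m n * (1 + Xb u m (n + 1)) * (1 + Xb u m (n - 1))
             / ((1 + (Xb u (m + 1) n)^-1) * (1 + (Xb u (m - 1) n)^-1)).
    by rewrite Xw_Xcol !Xb_Xcol (mutation_formula hnz hdiag hmut) eqb_id.
  by split=> //; apply: (positivity_transfer (col := true)) => m n; rewrite F eqb_id.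
- have F m n : Xb u' m n = if ~~ black m n then (Xw u m n)^-1
        else Xw u m n * (1 + Xw u m (n + 1)) * (1 + Xw u m (n - 1))
             / ((1 + (Xw u (m + 1) n)^-1) * (1 + (Xw u (m - 1) n)^-1)).
    by rewrite Xb_Xcol !Xw_Xcol (mutation_formula hnz hdiag hmut) eqbF_neg.
  by split=> //; apply: (positivity_transfer (col := false)) => m n; rewrite F eqbF_neg.
Qed.
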